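(* Let $q:\mathbb{R}^2\to\mathbb{C}^N$ be smooth, let $\Phi_1$ be a solution of the Lax pair at $\lambda=\lambda_1$, and let $\Phi$ be a solution at $\lambda$, with $\lambda\neq\overline{\lambda_1}$. Define $\Omega(\Phi_1,\Phi)=\dfrac{\Phi_1^{\dagger}\Lambda\Phi}{\mathrm{i}(\lambda-\overline{\lambda_1})}$ and $\Omega(\Phi_1,\Phi_1)$ as follows: if $\lambda_1\notin\mathbb{R}$, $\Omega(\Phi_1,\Phi_1)=\dfrac{\Phi_1^{\dagger}\Lambda\Phi_1}{\mathrm{i}(\lambda_1-\overline{\lambda_1})}$; if $\lambda_1\in\mathbb{R}$, assume $\Phi_1^{\dagger}\Lambda\Phi_1\equiv0$ and let $\Omega(\Phi_1,\Phi_1)$ be any real-valued smooth function with $d\,\Omega(\Phi_1,\Phi_1)=\omega(\Phi_1,\Phi_1)$. Assume $\Omega(\Phi_1,\Phi_1)$ vanishes nowhere. Set $$\Phi[1]=\Phi-\frac{\Phi_1\,\Omega(\Phi_1,\Phi)}{\Omega(\Phi_1,\Phi_1)},\qquad Q[1]=Q-\mathrm{i}\Big[\sigma_3,\frac{\Phi_1\Phi_1^{\dagger}\Lambda}{\Omega(\Phi_1,\Phi_1)}\Big].$$ Then $Q[1]$ has the form $\begin{pmatrix}0&-\mathbf q[1]^{\dagger}S\\ \mathbf q[1]&0\end{pmatrix}$ for some $\mathbf q[1]:\mathbb{R}^2\to\mathbb{C}^N$, and $\Phi[1]_x=(\mathrm{i}\lambda\sigma_3+\mathrm{i}Q[1])\Phi[1]$,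 $\Phi[1]_t=\big(\mathrm{i}\lambda^2\sigma_3+\mathrm{i}\lambda Q[1]-\tfrac12(\mathrm{i}\sigma_3Q[1]^2-\sigma_3Q[1]_x)\big)\Phi[1]$.
   Context: Fix integers $N\ge1$ and $0\le k\le N$, and let $S=\mathrm{diag}(s_1,\dots,s_N)$ with $s_l=1$ for $l\le k$ and $s_l=-1$ for $l>k$. The $N$-component NLS equation is $\mathrm{i}\mathbf q_t+\tfrac12\mathbf q_{xx}-\mathbf q\,(\mathbf q^{\dagger}S\mathbf q)=0$ for $\mathbf q=(q_1,\dots,q_N)^T:\mathbb{R}^2\to\mathbb{C}^N$ (here ${}^\dagger$ is conjugate transpose). Its Lax pair is $\Phi_x=(\mathrm{i}\lambda\sigma_3+\mathrm{i}Q)\Phi$, $\Phi_t=\big(\mathrm{i}\lambda^2\sigma_3+\mathrm{i}\lambda Q-\tfrac12(\mathrm{i}\sigma_3Q^2-\sigma_3Q_x)\big)\Phi$, for $\Phi:\mathbb{R}^2\to\mathbb{C}^{N+1}$ and spectral parameter $\lambda\in\mathbb{C}$, where $Q=\begin{pmatrix}0&-\mathbf q^{\dagger}S\\ \mathbf q&0_{N\times N}\end{pmatrix}$ and $\sigma_3=\mathrm{diag}(1,-I_N)$. A ''solution at $\lambda$'' is a smooth $\Phi$ satisfying both equations with that value of $\lambda$. Let $\Lambda=\mathrm{diag}(1,-s_1,\dots,-s_N)$ (i.e. $1$, then $-1$ repeated $k$ times, then $1$ repeated $N-k$ times). For a solution $\Phi_1$ at $\lambda_1$ and a solution $\Phi$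 at $\lambda$, $\omega(\Phi_1,\Phi)$ denotes the $1$-form $\Phi_1^{\dagger}\Lambda\sigma_3\Phi\,dx+[(\lambda+\overline{\lambda_1})\Phi_1^{\dagger}\Lambda\sigma_3\Phi+\Phi_1^{\dagger}\Lambda Q\Phi]\,dt$. $[A,B]=AB-BA$. *)

From Stdlib Require Import Reals Lra Arith.
Open Scope R_scope.

Record Cx := mkC { Re : R; Im : R }.
Definition C0 : Cx := mkC 0 0.
Definition C1 : Cx := mkC 1 0.
Definition Ci : Cx := mkC 0 1.
Definition CR (r : R) : Cx := mkC r 0.
Definition Cadd (a b : Cx) : Cx := mkC (Re a + Re b) (Im a + Im b).
Definition Copp (a : Cx) : Cx := mkC (- Re a) (- Im a).
Definition Csub (a b : Cx) : Cx := Cadd a (Copp b).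
Definition Cmul (a b : Cx) : Cx :=
  mkC (Re a * Re b - Im a * Im b) (Re a * Im b + Im a * Re b).
Definition Cconj (a : Cx) : Cx := mkC (Re a) (- Im a).
Definition Cinv (a : Cx) : Cx :=
  mkC (Re a / (Re a * Re a + Im a * Im a)) (- Im a / (Re a * Re a + Im a * Im a)).
Definition Cdiv (a b : Cx) : Cx := Cmul a (Cinv b).

Fixpoint Csum (n : nat) (f : nat -> Cx) : Cx :=
  match n with O => C0 | S m => Cadd (Csum m f) (f m) end.

(** * Vectors and matrices of size N+1, indices 0..N (0 = first component) *)
Definition vec := nat -> Cx.
Definition mat := nat -> nat -> Cx.

Definition mmul (N : nat) (A B : mat) : mat :=
  fun i j => Csum (S N) (fun l => Cmul (A i l) (B l j)).
Definition mvmul (N : nat) (A : mat) (v : vec) : vec :=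
  fun i => Csum (S N) (fun l => Cmul (A i l) (v l)).
Definition madd (A B : mat) : mat := fun i j => Cadd (A i j) (B i j).
Definition msub (A B : mat) : mat := fun i j => Csub (A i j) (B i j).
Definition mscal (c : Cx) (A : mat) : mat := fun i j => Cmul c (A i j).
Definition diagm (d : nat -> Cx) : mat := fun i j => if Nat.eqb i j then d i else C0.
Definition comm (N : nat) (A B : mat) : mat := msub (mmul N A B) (mmul N B A).
Definition vsub (u v : vec) : vec := fun i => Csub (u i) (v i).
Definition vscal (v : vec) (c : Cx) : vec := fun i => Cmul (v i) c.

Definition dform (N : nat) (u : vec) (d : nat -> Cx) (v : vec) : Cx :=
  Csum (S N) (fun i => Cmul (Cconj (u i)) (Cmul (d i) (v i))).
Definition mform (N : nat) (u : vec) (A : mat) (v : vec) : Cx :=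
  Csum (S N) (fun i => Cmul (Cconj (u i)) (mvmul N A v i)).

(** s_l (0-indexed l): s_l = 1 for l < k, -1 otherwise *)
Definition sgn (k l : nat) : Cx := if Nat.ltb l k then C1 else Copp C1.
Definition sigma3d (i : nat) : Cx := match i with O => C1 | S _ => Copp C1 end.
Definition sigma3 : mat := diagm sigma3d.
(** Lambda = diag(1, -s_1, ..., -s_N) *)
Definition Lamd (k : nat) (i : nat) : Cx := match i with O => C1 | S l => Copp (sgn k l) end.
(** Q = [[0, -q^dagger S], [q, 0]], q : nat -> Cx with components q 0 .. q (N-1) *)
Definition Qmat (N k : nat) (q : vec) : mat :=
  fun i j =>
    match i, j with
    | O, S j' => if Nat.ltb j' N then Copp (Cmul (Cconj (q j')) (sgn k j')) else C0
    | S i', O => if Nat.ltb i' N then q i' else C0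
    | _, _ => C0
    end.

Definition Ux (lam : Cx) (Q : mat) : mat :=
  madd (mscal (Cmul Ci lam) sigma3) (mscal Ci Q).
Definition Vt (N : nat) (lam : Cx) (Q Qx : mat) : mat :=
  msub (madd (mscal (Cmul Ci (Cmul lam lam)) sigma3) (mscal (Cmul Ci lam) Q))
       (mscal (CR (1/2)) (msub (mscal Ci (mmul N sigma3 (mmul N Q Q))) (mmul N sigma3 Qx))).

Definition cont2 (f : R -> R -> R) : Prop :=
  forall x t eps, eps > 0 -> exists d, d > 0 /\
    forall x' t', Rabs (x' - x) < d -> Rabs (t' - t) < d ->
      Rabs (f x' t' - f x t) < eps.

(** Cx^infinity: f belongs to a family of continuous functions closed under
    taking both partial derivatives (which must exist everywhere). *)
Definition smooth2 (f : R -> R -> R) : Prop :=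
  exists P : (R -> R -> R) -> Prop, P f /\
    forall g, P g -> cont2 g /\
      exists gx gt,
        (forall x t, derivable_pt_lim (fun y => g y t) x (gx x t)) /\
        (forall x t, derivable_pt_lim (fun s => g x s) t (gt x t)) /\
        P gx /\ P gt.

Definition Csmooth (f : R -> R -> Cx) : Prop :=
  smooth2 (fun x t => Re (f x t)) /\ smooth2 (fun x t => Im (f x t)).

Definition Cpdx (F G : R -> R -> Cx) : Prop :=
  forall x t, derivable_pt_lim (fun y => Re (F y t)) x (Re (G x t)) /\
              derivable_pt_lim (fun y => Im (F y t)) x (Im (G x t)).
Definition Cpdt (F G : R -> R -> Cx) : Prop :=
  forall x t, derivable_pt_lim (fun s => Re (F x s)) t (Re (G x t)) /\
              derivable_pt_lim (fun s => Im (F x s)) t (Im (G x t)).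

Definition vsmooth (n : nat) (F : R -> R -> vec) : Prop :=
  forall j, (j < n)%nat -> Csmooth (fun x t => F x t j).
Definition vpdx (N : nat) (F G : R -> R -> vec) : Prop :=
  forall j, (j <= N)%nat -> Cpdx (fun x t => F x t j) (fun x t => G x t j).
Definition vpdt (N : nat) (F G : R -> R -> vec) : Prop :=
  forall j, (j <= N)%nat -> Cpdt (fun x t => F x t j) (fun x t => G x t j).
Definition mpdx (N : nat) (F G : R -> R -> mat) : Prop :=
  forall i j, (i <= N)%nat -> (j <= N)%nat ->
    Cpdx (fun x t => F x t i j) (fun x t => G x t i j).

Definition lax_x (N : nat) (lam : Cx) (Qf : R -> R -> mat) (Phi : R -> R -> vec) : Prop :=
  vpdx N Phi (fun x t => mvmul N (Ux lam (Qf x t)) (Phi x t)).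
Definition lax_t (N : nat) (lam : Cx) (Qf : R -> R -> mat) (Phi : R -> R -> vec) : Prop :=
  exists Qx : R -> R -> mat, mpdx N Qf Qx /\
    vpdt N Phi (fun x t => mvmul N (Vt N lam (Qf x t) (Qx x t)) (Phi x t)).

Definition is_solution (N k : nat) (q : R -> R -> vec) (lam : Cx) (Phi : R -> R -> vec) : Prop :=
  vsmooth (S N) Phi /\
  lax_x N lam (fun x t => Qmat N k (q x t)) Phi /\
  lax_t N lam (fun x t => Qmat N k (q x t)) Phi.

(** The 1-form omega(Phi1, Phi) with Phi at lam: dx and dt coefficients *)
Definition omega_x (N k : nat) (Phi1 Phi : vec) : Cx :=
  dform N Phi1 (fun i => Cmul (Lamd k i) (sigma3d i)) Phi.
Definition omega_t (N k : nat) (lam1 lam : Cx) (Q : mat) (Phi1 Phi : vec) : Cx :=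
  Cadd (Cmul (Cadd lam (Cconj lam1)) (omega_x N k Phi1 Phi))
       (mform N Phi1 (mmul N (diagm (Lamd k)) Q) Phi).

Definition Omega (N k : nat) (lam1 lam : Cx) (Phi1 Phi : vec) : Cx :=
  Cdiv (dform N Phi1 (Lamd k) Phi) (Cmul Ci (Csub lam (Cconj lam1))).

Definition Phi_new (N k : nat) (lam1 lam : Cx) (Om11 : Cx) (Phi1 Phi : vec) : vec :=
  vsub Phi (vscal Phi1 (Cdiv (Omega N k lam1 lam Phi1 Phi) Om11)).
Definition Q_new (N k : nat) (Q : mat) (Om11 : Cx) (Phi1 : vec) : mat :=
  msub Q (mscal Ci (comm N sigma3
     (fun i j => Cdiv (Cmul (Phi1 i) (Cmul (Cconj (Phi1 j)) (Lamd k j))) Om11))).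

From Pilot Require Import Defs.
From Stdlib Require Import Reals.
Open Scope R_scope.
From Stdlib Require Import Lra Lia Field ZArith FunctionalExtensionality.
(* Re-import so that [C1] denotes the complex unit rather than Stdlib's [C1]. *)
Import Defs.

(** Write [U(lam,Q) = i lam s3 + i Q] and [V(lam,Q,Qx)] for the two Lax
    matrices, [<u,v> = u^dagger Lambda v] for the indefinite pairing, and
    [Om11] for the potential [Omega(Phi1,Phi1)].

    - [Cx] is made a field for [field], so that every matrix/vector identity,
      once reduced entrywise, is discharged by rational normalisation.
    - Linear algebra: [s3] and [Q] are self-adjoint for [<.,.>], [Q] anticommutes
      with [s3], and [[s3, M]]_ij = (s3_i - s3_j) M_ij.
    - Calculus: product, quotient and sum rules for complex functions of a real
      variable, and uniqueness of derivatives, which forces [Q_x] to have the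
      shape of [Q] and makes the t-equation independent of the chosen [Q_x].
    - [Omega_potential] collects the only properties of [Om11] the argument
      needs: [<Phi1,Phi1> = i (lam1 - conj lam1) Om11], [Om11] is real, and
      [d Om11 = omega(Phi1,Phi1)].  It holds in both cases of the theorem.
    - Given these, [Q[1]] has the shape of [Q], and the derivatives of
      [Phi[1]] computed by the product/quotient rules coincide with
      [U(lam,Q[1]) Phi[1]] and [V(lam,Q[1],Q[1]_x) Phi[1]] by field identities
      ([darboux_x_identity], [darboux_t_identity]).  *)

(** ** Complex numbers form a field *)

Lemma Cx_eq (a b : Cx) : Re a = Re b -> Im a = Im b -> a = b.
Proof. destruct a, b; simpl; intros; subst; reflexivity. Qed.

Ltac cxe := apply Cx_eq; simpl; ring.

Lemma Cx_ring : ring_theory C0 C1 Cadd Cmul Csub Copp (@eq Cx).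
Proof. constructor; intros; try cxe; reflexivity. Qed.

Lemma Cnorm_nz (a : Cx) : a <> C0 -> Re a * Re a + Im a * Im a <> 0.
Proof.
  intros H E; apply H. destruct a as [x y]; simpl in *.
  assert (x = 0) by nra. assert (y = 0) by nra. subst; reflexivity.
Qed.

Lemma Cx_field : field_theory C0 C1 Cadd Cmul Csub Copp Cdiv Cinv (@eq Cx).
Proof.
  constructor.
  - exact Cx_ring.
  - intro H; injection H; lra.
  - reflexivity.
  - intros p Hp. apply Cx_eq; simpl; field; exact (Cnorm_nz p Hp).
Qed.

(** Gaussian integers serve as the coefficient ring of [field], so that the
    constant [Ci] is handled symbolically ([Ci * Ci] normalises to [-1]). *)
Definition gz := (Z * Z)%type.
Definition gadd (a b : gz) : gz := (fst a + fst b, snd a + snd b)%Z.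
Definition gmul (a b : gz) : gz :=
  (fst a * fst b - snd a * snd b, fst a * snd b + snd a * fst b)%Z.
Definition gopp (a : gz) : gz := (- fst a, - snd a)%Z.
Definition gsub (a b : gz) : gz := gadd a (gopp b).
Definition geqb (a b : gz) : bool := (Z.eqb (fst a) (fst b) && Z.eqb (snd a) (snd b))%bool.
Definition gphi (a : gz) : Cx := mkC (IZR (fst a)) (IZR (snd a)).

Lemma Cx_morph : ring_morph C0 C1 Cadd Cmul Csub Copp (@eq Cx)
  (0%Z, 0%Z) (1%Z, 0%Z) gadd gmul gsub gopp geqb gphi.
Proof.
  constructor; intros; unfold gphi, gadd, gmul, gsub, gopp; simpl;
    try (apply Cx_eq; simpl; rewrite ?plus_IZR, ?minus_IZR, ?mult_IZR, ?opp_IZR; ring).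
  unfold geqb in H. apply andb_prop in H. destruct H as [H1 H2].
  apply Z.eqb_eq in H1; apply Z.eqb_eq in H2. rewrite H1, H2. reflexivity.
Qed.

Ltac cx_cst t :=
  match t with
  | Ci => constr:((0%Z, 1%Z))
  | C0 => constr:((0%Z, 0%Z))
  | Defs.C1 => constr:((1%Z, 0%Z))
  | _ => constr:(NotConstant)
  end.

Add Field CxF : Cx_field (morphism Cx_morph, constants [cx_cst]).

Ltac cx_side := repeat split; try assumption;
  try (unfold gphi; simpl; let Hc := fresh in intro Hc; injection Hc; intros; lra).

Lemma Ci_neq0 : Ci <> C0.
Proof. intro H; injection H; lra. Qed.

Lemma Cmul_neq0 a b : a <> C0 -> b <> C0 -> Cmul a b <> C0.
Proof.
  intros Ha Hb H. apply Hb. transitivity (Cdiv (Cmul a b) a); [field; auto|].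
  rewrite H; field; auto.
Qed.

Lemma CR_half : CR (1/2) = Cinv (Cadd C1 C1).
Proof. apply Cx_eq; simpl; field. Qed.

Lemma Cconj_add a b : Cconj (Cadd a b) = Cadd (Cconj a) (Cconj b). Proof. cxe. Qed.
Lemma Cconj_mul a b : Cconj (Cmul a b) = Cmul (Cconj a) (Cconj b). Proof. cxe. Qed.
Lemma Cconj_opp a : Cconj (Copp a) = Copp (Cconj a). Proof. cxe. Qed.
Lemma Cconj_sub a b : Cconj (Csub a b) = Csub (Cconj a) (Cconj b). Proof. cxe. Qed.
Lemma Cconj_Ci : Cconj Ci = Copp Ci. Proof. cxe. Qed.
Lemma Cconj_C1 : Cconj C1 = C1. Proof. cxe. Qed.
Lemma Cconj_C0 : Cconj C0 = C0. Proof. cxe. Qed.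
Lemma Cconj_CR r : Cconj (CR r) = CR r. Proof. cxe. Qed.
Lemma Cconj_conj a : Cconj (Cconj a) = a. Proof. cxe. Qed.

Lemma Cconj_inv a : Cconj (Cinv a) = Cinv (Cconj a).
Proof.
  destruct a as [x y]; apply Cx_eq; unfold Cconj, Cinv; simpl;
    replace (- y * - y) with (y * y) by ring; [reflexivity | unfold Rdiv; ring].
Qed.

Lemma Cconj_div a b : Cconj (Cdiv a b) = Cdiv (Cconj a) (Cconj b).
Proof. unfold Cdiv. rewrite Cconj_mul, Cconj_inv. reflexivity. Qed.

Lemma Cconj_real b : Im b = 0 -> Cconj b = b.
Proof. intros H. apply Cx_eq; simpl; lra. Qed.

Lemma Csub_conj_neq0 b : Im b <> 0 -> Csub b (Cconj b) <> C0.
Proof. intros H E. apply H. apply (f_equal Im) in E. simpl in E. lra. Qed.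

Lemma Csum_ext n f g : (forall i, (i < n)%nat -> f i = g i) -> Csum n f = Csum n g.
Proof.
  induction n; simpl; intros H; auto.
  rewrite IHn by (intros; apply H; lia). rewrite H by lia. reflexivity.
Qed.

Lemma Csum_add n f g : Csum n (fun i => Cadd (f i) (g i)) = Cadd (Csum n f) (Csum n g).
Proof. induction n; simpl; [cxe|]. rewrite IHn. ring. Qed.

Lemma Csum_sub n f g : Csum n (fun i => Csub (f i) (g i)) = Csub (Csum n f) (Csum n g).
Proof. induction n; simpl; [cxe|]. rewrite IHn. ring. Qed.

Lemma Csum_scal_l n c f : Csum n (fun i => Cmul c (f i)) = Cmul c (Csum n f).
Proof. induction n; simpl; [cxe|]. rewrite IHn. ring. Qed.

Lemma Csum_scal_r n c f : Csum n (fun i => Cmul (f i) c) = Cmul (Csum n f) c.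
Proof. induction n; simpl; [cxe|]. rewrite IHn. ring. Qed.

Lemma Csum_zero n f : (forall i, (i < n)%nat -> f i = C0) -> Csum n f = C0.
Proof.
  intros H. rewrite (Csum_ext n f (fun _ => C0)) by auto.
  clear H. induction n; simpl; auto. rewrite IHn. cxe.
Qed.

Lemma Csum_swap n m (f : nat -> nat -> Cx) :
  Csum n (fun i => Csum m (fun j => f i j)) = Csum m (fun j => Csum n (fun i => f i j)).
Proof.
  induction n; simpl.
  - symmetry; apply Csum_zero; auto.
  - rewrite IHn, <- Csum_add. reflexivity.
Qed.

Lemma Csum_conj n f : Cconj (Csum n f) = Csum n (fun i => Cconj (f i)).
Proof. induction n; simpl; [cxe|]. rewrite Cconj_add, IHn. reflexivity. Qed.

Lemma Csum_delta n j c (v : nat -> Cx) : (j < n)%nat ->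
  Csum n (fun l => Cmul (if Nat.eqb j l then c else C0) (v l)) = Cmul c (v j).
Proof.
  induction n; intros H; [lia|]. simpl.
  destruct (Nat.eq_dec j n) as [->|Hne].
  - rewrite Nat.eqb_refl, Csum_zero; [ring|].
    intros i Hi. destruct (Nat.eqb_spec n i); [lia|]. ring.
  - rewrite IHn by lia. destruct (Nat.eqb_spec j n); [lia|]. ring.
Qed.

Lemma Csum_delta_out n j c (v : nat -> Cx) : (n <= j)%nat ->
  Csum n (fun l => Cmul (if Nat.eqb j l then c else C0) (v l)) = C0.
Proof.
  intros H. apply Csum_zero. intros i Hi. destruct (Nat.eqb_spec j i); [lia|]. ring.
Qed.

Definition vadd (u v : vec) : vec := fun i => Cadd (u i) (v i).
Definition vcs (c : Cx) (v : vec) : vec := fun i => Cmul c (v i).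
(** [trunc N v] forgets the components of [v] beyond index [N]; matrices of
    size [N+1] act on [v] and [trunc N v] alike. *)
Definition trunc (N : nat) (v : vec) : vec := fun i => if Nat.leb i N then v i else C0.

Lemma mvmul_madd N A B v : mvmul N (madd A B) v = vadd (mvmul N A v) (mvmul N B v).
Proof.
  extensionality i. unfold mvmul, madd, vadd. rewrite <- Csum_add.
  apply Csum_ext; intros; ring.
Qed.

Lemma mvmul_msub N A B v : mvmul N (msub A B) v = vsub (mvmul N A v) (mvmul N B v).
Proof.
  extensionality i. unfold mvmul, msub, vsub. rewrite <- Csum_sub.
  apply Csum_ext; intros; unfold Csub; ring.
Qed.

Lemma mvmul_mscal N c A v : mvmul N (mscal c A) v = vcs c (mvmul N A v).
Proof.
  extensionality i. unfold mvmul, mscal, vcs. rewrite <- Csum_scal_l.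
  apply Csum_ext; intros; ring.
Qed.

Lemma mvmul_mmul N A B v : mvmul N (mmul N A B) v = mvmul N A (mvmul N B v).
Proof.
  extensionality i. unfold mvmul, mmul.
  rewrite (Csum_ext _ _ (fun l => Csum (S N) (fun m => Cmul (A i m) (Cmul (B m l) (v l))))).
  2:{ intros l _. rewrite <- Csum_scal_r. apply Csum_ext; intros; ring. }
  rewrite Csum_swap. apply Csum_ext; intros. rewrite <- Csum_scal_l. reflexivity.
Qed.

Lemma mvmul_vadd N A u v : mvmul N A (vadd u v) = vadd (mvmul N A u) (mvmul N A v).
Proof.
  extensionality i. unfold mvmul, vadd. rewrite <- Csum_add. apply Csum_ext; intros; ring.
Qed.

Lemma mvmul_vsub N A u v : mvmul N A (vsub u v) = vsub (mvmul N A u) (mvmul N A v).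
Proof.
  extensionality i. unfold mvmul, vsub. rewrite <- Csum_sub.
  apply Csum_ext; intros; unfold Csub; ring.
Qed.

Lemma mvmul_vscal N A u c : mvmul N A (vscal u c) = vscal (mvmul N A u) c.
Proof.
  extensionality i. unfold mvmul, vscal. rewrite <- Csum_scal_r. apply Csum_ext; intros; ring.
Qed.

Lemma mvmul_vcs N A u c : mvmul N A (vcs c u) = vcs c (mvmul N A u).
Proof.
  extensionality i. unfold mvmul, vcs. rewrite <- Csum_scal_l. apply Csum_ext; intros; ring.
Qed.

Lemma mvmul_trunc N A u : mvmul N A (trunc N u) = mvmul N A u.
Proof.
  extensionality i. unfold mvmul, trunc. apply Csum_ext; intros l Hl.
  destruct (Nat.leb_spec l N); [reflexivity | lia].
Qed.

Lemma mvmul_agree N A B v i :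
  (forall i j, (i <= N)%nat -> (j <= N)%nat -> A i j = B i j) -> (i <= N)%nat ->
  mvmul N A v i = mvmul N B v i.
Proof. intros H Hi. unfold mvmul. apply Csum_ext; intros. rewrite H by lia. reflexivity. Qed.

Lemma mvmul_rank1 N k (u w : vec) v :
  mvmul N (fun i j => Cmul (u i) (Cmul (Cconj (w j)) (Lamd k j))) v
  = vscal u (dform N w (Lamd k) v).
Proof.
  extensionality i. unfold mvmul, vscal, dform. rewrite <- Csum_scal_l.
  apply Csum_ext; intros; ring.
Qed.

Lemma mvmul_rank1_div N k (u w : vec) c v :
  mvmul N (fun i j => Cdiv (Cmul (u i) (Cmul (Cconj (w j)) (Lamd k j))) c) v
  = vscal u (Cdiv (dform N w (Lamd k) v) c).
Proof.
  extensionality i. unfold mvmul, vscal, dform, Cdiv. rewrite <- Csum_scal_r, <- Csum_scal_l.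
  apply Csum_ext; intros; ring.
Qed.

Lemma mvmul_sigma3 N v j : (j <= N)%nat -> mvmul N sigma3 v j = Cmul (sigma3d j) (v j).
Proof. intros. unfold mvmul, sigma3, diagm. apply Csum_delta. lia. Qed.

Lemma mvmul_sigma3_out N v j : (N < j)%nat -> mvmul N sigma3 v j = C0.
Proof. intros. unfold mvmul, sigma3, diagm. apply Csum_delta_out. lia. Qed.

Lemma sigma3_sigma3 N v : mvmul N sigma3 (mvmul N sigma3 v) = trunc N v.
Proof.
  extensionality j. unfold trunc. destruct (Nat.leb_spec j N).
  - rewrite !mvmul_sigma3 by lia.
    assert (Hsq : Cmul (sigma3d j) (sigma3d j) = C1) by (destruct j; simpl; cxe).
    transitivity (Cmul (Cmul (sigma3d j) (sigma3d j)) (v j)); [ring | rewrite Hsq; ring].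
  - apply mvmul_sigma3_out; lia.
Qed.

Lemma mvmul_Qmat_out N k qv v i : (N < i)%nat -> mvmul N (Qmat N k qv) v i = C0.
Proof.
  intros Hi. unfold mvmul. apply Csum_zero. intros l _.
  destruct i as [|i]; [lia|]. destruct l; simpl; [|ring].
  destruct (Nat.ltb_spec i N); [lia | ring].
Qed.

(** [Q] is off-diagonal, hence anticommutes with [sigma3]. *)
Lemma Qmat_sigma3 N k qv v : mvmul N (Qmat N k qv) (mvmul N sigma3 v)
  = vcs (Copp C1) (mvmul N sigma3 (mvmul N (Qmat N k qv) v)).
Proof.
  extensionality j. unfold vcs. destruct (Nat.leb_spec j N).
  - rewrite mvmul_sigma3 by lia.
    transitivity (Csum (S N) (fun l => Cmul (Qmat N k qv j l) (Cmul (sigma3d l) (v l)))).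
    { unfold mvmul at 1. apply Csum_ext; intros. rewrite mvmul_sigma3 by lia. reflexivity. }
    unfold mvmul. rewrite <- !Csum_scal_l. apply Csum_ext; intros l Hl.
    destruct j, l; simpl; try (destruct (Nat.ltb _ _)); cxe.
  - rewrite mvmul_sigma3_out, mvmul_Qmat_out by lia. cxe.
Qed.

Lemma comm_sigma3_entry N M i j : (i <= N)%nat -> (j <= N)%nat ->
  comm N sigma3 M i j = Cmul (Csub (sigma3d i) (sigma3d j)) (M i j).
Proof.
  intros Hi Hj. unfold comm, msub, mmul, sigma3, diagm.
  rewrite Csum_delta by lia.
  rewrite (Csum_ext _ (fun l => Cmul (M i l) (if Nat.eqb l j then sigma3d l else C0))
     (fun l => Cmul (if Nat.eqb j l then sigma3d j else C0) (M i l))).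
  2:{ intros l _. destruct (Nat.eqb_spec l j), (Nat.eqb_spec j l); subst; try lia; ring. }
  rewrite Csum_delta by lia. unfold Csub; ring.
Qed.

Lemma dform_vadd_r N u d v w : dform N u d (vadd v w) = Cadd (dform N u d v) (dform N u d w).
Proof. unfold dform, vadd. rewrite <- Csum_add. apply Csum_ext; intros; ring. Qed.
Lemma dform_vsub_r N u d v w : dform N u d (vsub v w) = Csub (dform N u d v) (dform N u d w).
Proof. unfold dform, vsub. rewrite <- Csum_sub. apply Csum_ext; intros; unfold Csub; ring. Qed.
Lemma dform_vscal_r N u d v c : dform N u d (vscal v c) = Cmul (dform N u d v) c.
Proof. unfold dform, vscal. rewrite <- Csum_scal_r. apply Csum_ext; intros; ring. Qed.
Lemma dform_vcs_r N u d v c : dform N u d (vcs c v) = Cmul c (dform N u d v).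
Proof. unfold dform, vcs. rewrite <- Csum_scal_l. apply Csum_ext; intros; ring. Qed.
Lemma dform_vadd_l N u d v w : dform N (vadd v w) d u = Cadd (dform N v d u) (dform N w d u).
Proof. unfold dform, vadd. rewrite <- Csum_add. apply Csum_ext; intros. rewrite Cconj_add; ring. Qed.
Lemma dform_vsub_l N u d v w : dform N (vsub v w) d u = Csub (dform N v d u) (dform N w d u).
Proof.
  unfold dform, vsub. rewrite <- Csum_sub. apply Csum_ext; intros.
  rewrite Cconj_sub; unfold Csub; ring.
Qed.
Lemma dform_vscal_l N u d v c : dform N (vscal v c) d u = Cmul (dform N v d u) (Cconj c).
Proof. unfold dform, vscal. rewrite <- Csum_scal_r. apply Csum_ext; intros. rewrite Cconj_mul; ring. Qed.
Lemma dform_vcs_l N u d v c : dform N (vcs c v) d u = Cmul (Cconj c) (dform N v d u).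
Proof. unfold dform, vcs. rewrite <- Csum_scal_l. apply Csum_ext; intros. rewrite Cconj_mul; ring. Qed.
Lemma dform_trunc_r N u d v : dform N u d (trunc N v) = dform N u d v.
Proof.
  unfold dform, trunc. apply Csum_ext; intros l Hl.
  destruct (Nat.leb_spec l N); [reflexivity | lia].
Qed.
Lemma dform_trunc_l N u d v : dform N (trunc N v) d u = dform N v d u.
Proof.
  unfold dform, trunc. apply Csum_ext; intros l Hl.
  destruct (Nat.leb_spec l N); [reflexivity | lia].
Qed.

Lemma dform_adjoint N (A B : mat) d u w :
  (forall i l, (i <= N)%nat -> (l <= N)%nat ->
     Cmul (Cconj (A i l)) (d i) = Cmul (d l) (B l i)) ->
  dform N (mvmul N A u) d w = dform N u d (mvmul N B w).
Proof.
  intros H. unfold dform, mvmul.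
  rewrite (Csum_ext _ _ (fun i => Csum (S N)
     (fun l => Cmul (Cconj (u l)) (Cmul (Cmul (Cconj (A i l)) (d i)) (w i))))).
  2:{ intros i Hi. rewrite Csum_conj, <- Csum_scal_r. apply Csum_ext; intros.
      rewrite Cconj_mul. ring. }
  rewrite Csum_swap. apply Csum_ext; intros l Hl.
  rewrite <- !Csum_scal_l. apply Csum_ext; intros i Hi.
  rewrite H by lia. ring.
Qed.

Lemma dform_sigma3_l N k u w :
  dform N (mvmul N sigma3 u) (Lamd k) w = dform N u (Lamd k) (mvmul N sigma3 w).
Proof.
  apply dform_adjoint. intros i l Hi Hl. unfold sigma3, diagm.
  destruct (Nat.eqb_spec i l); destruct (Nat.eqb_spec l i); try lia.
  - subst. destruct l; simpl; [cxe|]. unfold sgn; destruct (Nat.ltb _ _); cxe.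
  - rewrite Cconj_C0; ring.
Qed.

Lemma dform_Qmat_l N k qv u w : dform N (mvmul N (Qmat N k qv) u) (Lamd k) w
  = dform N u (Lamd k) (mvmul N (Qmat N k qv) w).
Proof.
  apply dform_adjoint. intros i l Hi Hl.
  destruct i, l; simpl; try (rewrite Cconj_C0; ring).
  - destruct (Nat.ltb_spec l N); [|lia]. unfold sgn; destruct (Nat.ltb _ _); cxe.
  - destruct (Nat.ltb_spec i N); [|lia]. unfold sgn; destruct (Nat.ltb _ _); cxe.
Qed.

(** [<u, u>] is real since [Lambda] is real diagonal. *)
Lemma dform_self_real N k u : Cconj (dform N u (Lamd k) u) = dform N u (Lamd k) u.
Proof.
  unfold dform. rewrite Csum_conj. apply Csum_ext; intros i _.
  assert (HL : Cconj (Lamd k i) = Lamd k i)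
    by (destruct i; simpl; [cxe | unfold sgn; destruct (Nat.ltb _ _); cxe]).
  rewrite !Cconj_mul, Cconj_conj, HL. ring.
Qed.

Lemma omega_x_dform N k u v : omega_x N k u v = dform N u (Lamd k) (mvmul N sigma3 v).
Proof. unfold omega_x, dform. apply Csum_ext; intros. rewrite mvmul_sigma3 by lia. ring. Qed.

Lemma mform_Lamd N k u A v :
  mform N u (mmul N (diagm (Lamd k)) A) v = dform N u (Lamd k) (mvmul N A v).
Proof.
  unfold mform. rewrite mvmul_mmul. unfold dform. apply Csum_ext; intros.
  unfold mvmul at 1, diagm. rewrite Csum_delta by lia. reflexivity.
Qed.

(** Normalisation of matrix/vector expressions to scalar combinations of the
    pairings and components, used before calling [field]. *)
Hint Rewrite mvmul_madd mvmul_msub mvmul_mscal mvmul_mmul mvmul_rank1_div mvmul_rank1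
  mvmul_vadd mvmul_vsub mvmul_vscal mvmul_vcs sigma3_sigma3 Qmat_sigma3 mvmul_trunc
  dform_vadd_r dform_vsub_r dform_vscal_r dform_vcs_r dform_vadd_l dform_vsub_l
  dform_vscal_l dform_vcs_l dform_trunc_r dform_trunc_l dform_sigma3_l dform_Qmat_l
  Cconj_add Cconj_mul Cconj_opp Cconj_sub Cconj_Ci Cconj_C1 Cconj_C0 Cconj_CR
  Cconj_conj Cconj_div Cconj_inv : vnorm.

(** ** Derivatives of complex functions of one real variable *)

Definition cd (f : R -> Cx) (y : R) (v : Cx) : Prop :=
  derivable_pt_lim (fun s => Re (f s)) y (Re v) /\ derivable_pt_lim (fun s => Im (f s)) y (Im v).

Lemma dl_val f y l l' : derivable_pt_lim f y l -> l = l' -> derivable_pt_lim f y l'.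
Proof. intros H ->; exact H. Qed.

Lemma cd_val f y v w : cd f y v -> v = w -> cd f y w.
Proof. intros H ->; exact H. Qed.

Lemma cd_ext f g y v : (forall s, f s = g s) -> cd f y v -> cd g y v.
Proof.
  intros E [H1 H2]; split; eapply derivable_pt_lim_ext; try eassumption;
    intros; simpl; rewrite E; reflexivity.
Qed.

Lemma cd_unique f y a b : cd f y a -> cd f y b -> a = b.
Proof. intros [H1 H2] [H3 H4]. apply Cx_eq; eapply uniqueness_limite; eauto. Qed.

Lemma cd_const c y : cd (fun _ => c) y C0.
Proof. split; simpl; apply (derivable_pt_lim_const _ y). Qed.

Lemma cd_add f g y a b : cd f y a -> cd g y b -> cd (fun s => Cadd (f s) (g s)) y (Cadd a b).
Proof.
  intros [Hf1 Hf2] [Hg1 Hg2]; split; simpl.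
  - apply (derivable_pt_lim_plus (fun s => Re (f s)) (fun s => Re (g s))); auto.
  - apply (derivable_pt_lim_plus (fun s => Im (f s)) (fun s => Im (g s))); auto.
Qed.

Lemma cd_opp f y a : cd f y a -> cd (fun s => Copp (f s)) y (Copp a).
Proof.
  intros [Hf1 Hf2]; split; simpl.
  - apply (derivable_pt_lim_opp (fun s => Re (f s))); auto.
  - apply (derivable_pt_lim_opp (fun s => Im (f s))); auto.
Qed.

Lemma cd_sub f g y a b : cd f y a -> cd g y b -> cd (fun s => Csub (f s) (g s)) y (Csub a b).
Proof. intros Hf Hg. unfold Csub. apply cd_add; auto. apply cd_opp; auto. Qed.

Lemma cd_conj f y a : cd f y a -> cd (fun s => Cconj (f s)) y (Cconj a).
Proof.
  intros [Hf1 Hf2]; split; simpl; auto.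
  apply (derivable_pt_lim_opp (fun s => Im (f s))); auto.
Qed.

Lemma cd_mul f g y a b : cd f y a -> cd g y b ->
  cd (fun s => Cmul (f s) (g s)) y (Cadd (Cmul a (g y)) (Cmul (f y) b)).
Proof.
  intros [Hf1 Hf2] [Hg1 Hg2]; split; simpl; eapply dl_val.
  - apply (derivable_pt_lim_minus (fun s => Re (f s) * Re (g s)) (fun s => Im (f s) * Im (g s)));
      apply (derivable_pt_lim_mult (fun s => _ (f s)) (fun s => _ (g s))); eauto.
  - ring.
  - apply (derivable_pt_lim_plus (fun s => Re (f s) * Im (g s)) (fun s => Im (f s) * Re (g s)));
      apply (derivable_pt_lim_mult (fun s => _ (f s)) (fun s => _ (g s))); eauto.
  - ring.
Qed.

Lemma cd_inv f y a : cd f y a -> f y <> C0 ->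
  cd (fun s => Cinv (f s)) y (Copp (Cmul a (Cmul (Cinv (f y)) (Cinv (f y))))).
Proof.
  intros [Hf1 Hf2] Hnz. pose proof (Cnorm_nz _ Hnz) as Hn.
  assert (Dn : derivable_pt_lim (fun s => Re (f s) * Re (f s) + Im (f s) * Im (f s)) y
     (Re a * Re (f y) + Re (f y) * Re a + (Im a * Im (f y) + Im (f y) * Im a))).
  { apply (derivable_pt_lim_plus (fun s => Re (f s) * Re (f s)) (fun s => Im (f s) * Im (f s)));
      apply (derivable_pt_lim_mult (fun s => _ (f s)) (fun s => _ (f s))); eauto. }
  split; simpl; eapply dl_val.
  - apply (derivable_pt_lim_div (fun s => Re (f s))
      (fun s => Re (f s) * Re (f s) + Im (f s) * Im (f s))); eauto.
  - destruct (f y) as [x z]; destruct a as [u v]; simpl in *. unfold Rsqr. field. auto.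
  - apply (derivable_pt_lim_div (fun s => - Im (f s))
      (fun s => Re (f s) * Re (f s) + Im (f s) * Im (f s))); eauto.
    apply (derivable_pt_lim_opp (fun s => Im (f s))); eauto.
  - destruct (f y) as [x z]; destruct a as [u v]; simpl in *. unfold Rsqr. field. auto.
Qed.

Lemma cd_div f g y a b : cd f y a -> cd g y b -> g y <> C0 ->
  cd (fun s => Cdiv (f s) (g s)) y (Cdiv (Csub (Cmul a (g y)) (Cmul (f y) b)) (Cmul (g y) (g y))).
Proof.
  intros Hf Hg Hz. unfold Cdiv at 1. eapply cd_val.
  - apply cd_mul; [exact Hf | apply cd_inv; eauto].
  - cbv beta. field. auto.
Qed.

Lemma cd_Csum n (f : R -> nat -> Cx) g y :
  (forall i, (i < n)%nat -> cd (fun s => f s i) y (g i)) ->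
  cd (fun s => Csum n (f s)) y (Csum n g).
Proof.
  induction n; intros H; simpl.
  - apply cd_const.
  - apply cd_add; [apply IHn; intros; apply H; lia | apply H; lia].
Qed.

Lemma cd_dform N (f1 f : R -> vec) d f1' f' y :
  (forall i, (i <= N)%nat -> cd (fun s => f1 s i) y (f1' i)) ->
  (forall i, (i <= N)%nat -> cd (fun s => f s i) y (f' i)) ->
  cd (fun s => dform N (f1 s) d (f s)) y (Cadd (dform N f1' d (f y)) (dform N (f1 y) d f')).
Proof.
  intros H1 H2. unfold dform. eapply cd_val.
  - apply cd_Csum. intros i Hi.
    apply cd_mul; [apply cd_conj, H1; lia | apply cd_mul; [apply cd_const | apply H2; lia]].
  - rewrite <- Csum_add. apply Csum_ext; intros. ring.
Qed.

Lemma Qmat_dx_shape N k (q : R -> R -> vec) Qx :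
  mpdx N (fun x t => Qmat N k (q x t)) Qx ->
  forall x t i j, (i <= N)%nat -> (j <= N)%nat ->
    Qx x t i j = Qmat N k (fun l => Qx x t (S l) 0%nat) i j.
Proof.
  intros H x t i j Hi Hj.
  pose proof (H i j Hi Hj x t) as Hc.
  change (cd (fun y => Qmat N k (q y t) i j) x (Qx x t i j)) in Hc.
  destruct i as [|i'], j as [|j'].
  - simpl. eapply cd_unique; [exact Hc | simpl; apply cd_const].
  - assert (E : Nat.ltb j' N = true) by (apply Nat.ltb_lt; lia).
    pose proof (H (S j') 0%nat Hj ltac:(lia) x t) as Hq.
    change (cd (fun y => Qmat N k (q y t) (S j') 0%nat) x (Qx x t (S j') 0%nat)) in Hq.
    simpl in Hq, Hc |- *. rewrite E in Hq, Hc |- *.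
    eapply cd_unique; [exact Hc|]. eapply cd_val.
    + apply cd_opp, cd_mul; [apply cd_conj; exact Hq | apply cd_const].
    + cbv beta. ring.
  - simpl. destruct (Nat.ltb_spec i' N); [reflexivity | lia].
  - simpl. eapply cd_unique; [exact Hc | simpl; apply cd_const].
Qed.

Lemma Qmat_dx N k (q : R -> R -> vec) Qx :
  mpdx N (fun x t => Qmat N k (q x t)) Qx ->
  mpdx N (fun x t => Qmat N k (q x t)) (fun x t => Qmat N k (fun l => Qx x t (S l) 0%nat)).
Proof.
  intros H i j Hi Hj x t.
  rewrite <- (Qmat_dx_shape N k q Qx H x t i j Hi Hj). exact (H i j Hi Hj x t).
Qed.

Definition lax_t_with (N k : nat) (lam : Cx) (q qx : R -> R -> vec) (Phi : R -> R -> vec) : Prop :=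
  vpdt N Phi (fun x t => mvmul N (Vt N lam (Qmat N k (q x t)) (Qmat N k (qx x t))) (Phi x t)).

(** By uniqueness of derivatives, [lax_t] does not depend on the witness [Q_x]. *)
Lemma lax_t_with_of_lax_t N k lam (q qx : R -> R -> vec) Phi :
  mpdx N (fun x t => Qmat N k (q x t)) (fun x t => Qmat N k (qx x t)) ->
  lax_t N lam (fun x t => Qmat N k (q x t)) Phi -> lax_t_with N k lam q qx Phi.
Proof.
  intros Hqx [Qx [HQx Ht]] i Hi x t. eapply cd_val; [exact (Ht i Hi x t)|].
  unfold Vt. rewrite !mvmul_msub, !mvmul_madd, !mvmul_mscal, !mvmul_msub, !mvmul_mscal, !mvmul_mmul.
  unfold vsub, vadd, vcs. rewrite !(mvmul_sigma3 N _ i Hi).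
  rewrite (mvmul_agree N (Qx x t) (Qmat N k (qx x t))); [reflexivity | | exact Hi].
  intros a b Ha Hb. apply (cd_unique (fun y => Qmat N k (q y t) a b) x).
  - exact (HQx a b Ha Hb x t).
  - exact (Hqx a b Ha Hb x t).
Qed.

Definition Omega_potential (N k : nat) (lam1 : Cx) (q Phi1 : R -> R -> vec)
    (Om : R -> R -> Cx) : Prop :=
  (forall x t, dform N (Phi1 x t) (Lamd k) (Phi1 x t)
               = Cmul Ci (Cmul (Csub lam1 (Cconj lam1)) (Om x t))) /\
  (forall x t, Cconj (Om x t) = Om x t) /\
  Cpdx Om (fun x t => omega_x N k (Phi1 x t) (Phi1 x t)) /\
  Cpdt Om (fun x t => omega_t N k lam1 lam1 (Qmat N k (q x t)) (Phi1 x t) (Phi1 x t)).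

(** For real [lam1] this is exactly the hypothesis of the theorem. *)
Lemma Omega_potential_real N k lam1 (q Phi1 : R -> R -> vec) Om :
  Im lam1 = 0 ->
  (forall x t, dform N (Phi1 x t) (Lamd k) (Phi1 x t) = C0) ->
  (forall x t, Im (Om x t) = 0) ->
  Cpdx Om (fun x t => omega_x N k (Phi1 x t) (Phi1 x t)) ->
  Cpdt Om (fun x t => omega_t N k lam1 lam1 (Qmat N k (q x t)) (Phi1 x t) (Phi1 x t)) ->
  Omega_potential N k lam1 q Phi1 Om.
Proof.
  intros Him Hnull HIm Hdx Hdt. split; [|split; [|split]]; auto.
  - intros x t. rewrite Hnull, (Cconj_real _ Him). ring.
  - intros x t. apply Cx_eq; simpl; [reflexivity | rewrite HIm; lra].
Qed.

Lemma Omega_potential_complex N k lam1 (q qx Phi1 : R -> R -> vec) Om :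
  Im lam1 <> 0 ->
  lax_x N lam1 (fun x t => Qmat N k (q x t)) Phi1 ->
  lax_t_with N k lam1 q qx Phi1 ->
  (forall x t, Om x t = Omega N k lam1 lam1 (Phi1 x t) (Phi1 x t)) ->
  Omega_potential N k lam1 q Phi1 Om.
Proof.
  intros Him Hx Ht HOm.
  pose proof (Csub_conj_neq0 _ Him) as Hb.
  assert (Hden : Cmul Ci (Csub lam1 (Cconj lam1)) <> C0) by (apply Cmul_neq0; auto; apply Ci_neq0).
  split; [|split; [|split]].
  - intros x t. rewrite HOm. unfold Omega. field. cx_side.
  - intros x t. rewrite HOm. unfold Omega. rewrite Cconj_div, dform_self_real. f_equal.
    rewrite Cconj_mul, Cconj_Ci, Cconj_sub, Cconj_conj. ring.
  - intros x t. change (cd (fun y => Om y t) x (omega_x N k (Phi1 x t) (Phi1 x t))).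
    apply (cd_ext (fun y => Omega N k lam1 lam1 (Phi1 y t) (Phi1 y t))); [intros; symmetry; apply HOm|].
    unfold Omega. eapply cd_val.
    + apply cd_div; [apply cd_dform; intros i Hi; exact (Hx i Hi x t) | apply cd_const | exact Hden].
    + cbv beta. rewrite omega_x_dform. unfold Ux. autorewrite with vnorm. field. cx_side.
  - intros x t. change (cd (fun s => Om x s) t
      (omega_t N k lam1 lam1 (Qmat N k (q x t)) (Phi1 x t) (Phi1 x t))).
    apply (cd_ext (fun s => Omega N k lam1 lam1 (Phi1 x s) (Phi1 x s))); [intros; symmetry; apply HOm|].
    unfold Omega. eapply cd_val.
    + apply cd_div; [apply cd_dform; intros i Hi; exact (Ht i Hi x t) | apply cd_const | exact Hden].
    + cbv beta. unfold omega_t. rewrite omega_x_dform, mform_Lamd. unfold Vt.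
      autorewrite with vnorm. rewrite CR_half. field. cx_side.
Qed.

(** ** Pointwise algebra of the Darboux transformation *)

(** [Q[1]] has the shape of [Q] as soon as [Om] is real and non-zero: the
    correction [-i [s3, Phi1 Phi1^dagger Lambda / Om]] vanishes on the
    diagonal blocks and its off-diagonal blocks are related by [-.^dagger S]. *)
Lemma Q_new_shape N k qv Om (F1 : vec) i j :
  (i <= N)%nat -> (j <= N)%nat -> Om <> C0 -> Cconj Om = Om ->
  Q_new N k (Qmat N k qv) Om F1 i j
  = Qmat N k (fun l => Q_new N k (Qmat N k qv) Om F1 (S l) 0%nat) i j.
Proof.
  intros Hi Hj Hz Hr. unfold Q_new, msub, mscal. rewrite !comm_sigma3_entry by lia.
  destruct i as [|i'], j as [|j'].
  - simpl. ring.
  - assert (E : Nat.ltb j' N = true) by (apply Nat.ltb_lt; lia).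
    simpl. rewrite E, (comm_sigma3_entry N _ (S j') 0%nat) by lia. simpl.
    autorewrite with vnorm. rewrite ?Hr.
    unfold sgn. destruct (Nat.ltb j' k); simpl; rewrite ?Cconj_C1, ?Cconj_opp, ?Cconj_C1;
      autorewrite with vnorm; field; cx_side.
  - assert (E : Nat.ltb i' N = true) by (apply Nat.ltb_lt; lia).
    simpl. rewrite E, comm_sigma3_entry by lia. reflexivity.
  - simpl. ring.
Qed.

(** The derivative of the [j]-th entry of [Phi[1]], by the product and
    quotient rules, given derivatives [f1'], [f'], [om'] of [Phi1], [Phi], [Om]. *)
Definition Phi_new_d (N k : nat) (lam1 lam : Cx) (f1 f f1' f' : vec) (om om' : Cx) (j : nat) : Cx :=
  Csub (f' j) (Cadd (Cmul (f1' j) (Cdiv (Omega N k lam1 lam f1 f) om))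
   (Cmul (f1 j) (Cdiv (Csub (Cmul (Cdiv (Cadd (dform N f1' (Lamd k) f) (dform N f1 (Lamd k) f'))
        (Cmul Ci (Csub lam (Cconj lam1)))) om) (Cmul (Omega N k lam1 lam f1 f) om')) (Cmul om om)))).

Lemma cd_Phi_new N k lam1 lam (f1 f : R -> vec) (om : R -> Cx) f1' f' om' y j :
  (j <= N)%nat ->
  (forall i, (i <= N)%nat -> cd (fun s => f1 s i) y (f1' i)) ->
  (forall i, (i <= N)%nat -> cd (fun s => f s i) y (f' i)) ->
  cd om y om' -> om y <> C0 -> Csub lam (Cconj lam1) <> C0 ->
  cd (fun s => Phi_new N k lam1 lam (om s) (f1 s) (f s) j) y
     (Phi_new_d N k lam1 lam (f1 y) (f y) f1' f' (om y) om' j).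
Proof.
  intros Hj H1 H2 Ho Hoz Hmu. unfold Phi_new, vsub, vscal, Omega.
  assert (Hden : Cmul Ci (Csub lam (Cconj lam1)) <> C0) by (apply Cmul_neq0; auto; apply Ci_neq0).
  eapply cd_val.
  - apply cd_sub; [apply H2; auto|]. apply cd_mul; [apply H1; auto|].
    apply cd_div; [| exact Ho | exact Hoz].
    apply cd_div; [apply cd_dform; auto | apply cd_const | exact Hden].
  - unfold Phi_new_d, Omega. cbv beta. field. cx_side.
Qed.

Lemma darboux_x_identity N k qv lam1 lam (F1 F : vec) Om j :
  (j <= N)%nat -> Om <> C0 -> Csub lam (Cconj lam1) <> C0 ->
  dform N F1 (Lamd k) F1 = Cmul Ci (Cmul (Csub lam1 (Cconj lam1)) Om) ->
  Phi_new_d N k lam1 lam F1 F (mvmul N (Ux lam1 (Qmat N k qv)) F1) (mvmul N (Ux lam (Qmat N k qv)) F)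
    Om (dform N F1 (Lamd k) (mvmul N sigma3 F1)) j
  = mvmul N (Ux lam (Q_new N k (Qmat N k qv) Om F1)) (Phi_new N k lam1 lam Om F1 F) j.
Proof.
  intros Hj HOm Hmu Hnorm.
  unfold Phi_new_d, Ux, Q_new, comm, Phi_new, Omega.
  autorewrite with vnorm.
  unfold vadd, vsub, vscal, vcs, trunc.
  rewrite !(mvmul_sigma3 N _ j Hj).
  replace (Nat.leb j N) with true by (symmetry; apply Nat.leb_le; exact Hj).
  rewrite Hnorm.
  field. cx_side.
Qed.

Definition rank1 (k : nat) (u w : vec) : mat :=
  fun i j => Cmul (u i) (Cmul (Cconj (w j)) (Lamd k j)).

(** The x-derivative of [Phi1 Phi1^dagger Lambda / Om], using [Phi1_x = U(lam1,Q) Phi1]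
    and [Om_x = <Phi1, s3 Phi1>]. *)
Definition rank1_dx (N k : nat) (lam1 : Cx) (Q : mat) (F1 : vec) (Om : Cx) : mat :=
  let f1x := mvmul N (Ux lam1 Q) F1 in
  let omx := dform N F1 (Lamd k) (mvmul N sigma3 F1) in
  msub (mscal (Cinv Om) (madd (rank1 k f1x F1) (rank1 k F1 f1x)))
       (mscal (Cdiv omx (Cmul Om Om)) (rank1 k F1 F1)).

Definition Q_new_dx (N k : nat) (lam1 : Cx) (Q Qx : mat) (F1 : vec) (Om : Cx) : mat :=
  msub Qx (mscal Ci (comm N sigma3 (rank1_dx N k lam1 Q F1 Om))).

Lemma darboux_t_identity N k qv qxv lam1 lam (F1 F : vec) Om j :
  (j <= N)%nat -> Om <> C0 -> Csub lam (Cconj lam1) <> C0 ->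
  dform N F1 (Lamd k) F1 = Cmul Ci (Cmul (Csub lam1 (Cconj lam1)) Om) ->
  Phi_new_d N k lam1 lam F1 F (mvmul N (Vt N lam1 (Qmat N k qv) (Qmat N k qxv)) F1)
    (mvmul N (Vt N lam (Qmat N k qv) (Qmat N k qxv)) F)
    Om (Cadd (Cmul (Cadd lam1 (Cconj lam1)) (dform N F1 (Lamd k) (mvmul N sigma3 F1)))
             (dform N F1 (Lamd k) (mvmul N (Qmat N k qv) F1))) j
  = mvmul N (Vt N lam (Q_new N k (Qmat N k qv) Om F1)
               (Q_new_dx N k lam1 (Qmat N k qv) (Qmat N k qxv) F1 Om))
      (Phi_new N k lam1 lam Om F1 F) j.
Proof.
  intros Hj HOm Hmu Hnorm.
  unfold Phi_new_d, Vt, Q_new_dx, rank1_dx, rank1, Ux, Q_new, comm, Phi_new, Omega.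
  autorewrite with vnorm.
  unfold vadd, vsub, vscal, vcs, trunc.
  rewrite !(mvmul_sigma3 N _ j Hj).
  rewrite Hnorm, CR_half.
  replace (Nat.leb j N) with true by (symmetry; apply Nat.leb_le; exact Hj).
  field. cx_side.
Qed.

Section Darboux.

Variables (N k : nat) (lam1 lam : Cx) (q qx Phi1 Phi : R -> R -> vec) (Om : R -> R -> Cx).

Hypothesis Hqx : mpdx N (fun x t => Qmat N k (q x t)) (fun x t => Qmat N k (qx x t)).
Hypothesis Hx1 : lax_x N lam1 (fun x t => Qmat N k (q x t)) Phi1.
Hypothesis Hx : lax_x N lam (fun x t => Qmat N k (q x t)) Phi.
Hypothesis Ht1 : lax_t_with N k lam1 q qx Phi1.
Hypothesis Ht : lax_t_with N k lam q qx Phi.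
Hypothesis HOm : Omega_potential N k lam1 q Phi1 Om.
Hypothesis Hnz : forall x t, Om x t <> C0.
Hypothesis Hmu : lam <> Cconj lam1.

Let Q1 (x t : R) : mat := Q_new N k (Qmat N k (q x t)) (Om x t) (Phi1 x t).
Let Phi1new (x t : R) : vec := Phi_new N k lam1 lam (Om x t) (Phi1 x t) (Phi x t).

Lemma Csub_lam_neq0 : Csub lam (Cconj lam1) <> C0.
Proof.
  intro E. apply Hmu.
  transitivity (Cadd (Csub lam (Cconj lam1)) (Cconj lam1)); [ring | rewrite E; ring].
Qed.

Lemma darboux_potential_shape :
  exists q1 : R -> R -> vec,
    forall x t i j, (i <= N)%nat -> (j <= N)%nat -> Q1 x t i j = Qmat N k (q1 x t) i j.
Proof.
  destruct HOm as [_ [Hreal _]].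
  exists (fun x t l => Q1 x t (S l) 0%nat). intros x t i j Hi Hj.
  apply Q_new_shape; auto.
Qed.

Lemma darboux_lax_x : lax_x N lam Q1 Phi1new.
Proof.
  destruct HOm as [Hnorm [_ [HOx _]]].
  intros j Hj x t.
  change (cd (fun y => Phi1new y t j) x (mvmul N (Ux lam (Q1 x t)) (Phi1new x t) j)).
  eapply cd_val.
  - apply (cd_Phi_new N k lam1 lam (fun s => Phi1 s t) (fun s => Phi s t) (fun s => Om s t)
      (mvmul N (Ux lam1 (Qmat N k (q x t))) (Phi1 x t))
      (mvmul N (Ux lam (Qmat N k (q x t))) (Phi x t))
      (omega_x N k (Phi1 x t) (Phi1 x t)) x j Hj).
    + intros i Hi. exact (Hx1 i Hi x t).
    + intros i Hi. exact (Hx i Hi x t).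
    + exact (HOx x t).
    + apply Hnz.
    + exact Csub_lam_neq0.
  - rewrite omega_x_dform. apply darboux_x_identity; auto. exact Csub_lam_neq0.
Qed.

Lemma Q_new_has_dx :
  mpdx N Q1 (fun x t => Q_new_dx N k lam1 (Qmat N k (q x t)) (Qmat N k (qx x t)) (Phi1 x t) (Om x t)).
Proof.
  destruct HOm as [_ [_ [HOx _]]].
  intros i j Hi Hj x t.
  change (cd (fun y => Q1 y t i j) x
    (Q_new_dx N k lam1 (Qmat N k (q x t)) (Qmat N k (qx x t)) (Phi1 x t) (Om x t) i j)).
  apply (cd_ext (fun y => Csub (Qmat N k (q y t) i j) (Cmul Ci (Cmul (Csub (sigma3d i) (sigma3d j))
      (Cdiv (Cmul (Phi1 y t i) (Cmul (Cconj (Phi1 y t j)) (Lamd k j))) (Om y t)))))).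
  { intros s. unfold Q1, Q_new, msub, mscal. rewrite comm_sigma3_entry by auto. reflexivity. }
  pose proof (Hnz x t) as Hz.
  eapply cd_val.
  - apply cd_sub; [exact (Hqx i j Hi Hj x t)|].
    apply cd_mul; [apply cd_const|]. apply cd_mul; [apply cd_const|].
    apply cd_div; [| exact (HOx x t) | exact Hz].
    apply cd_mul; [exact (Hx1 i Hi x t)|].
    apply cd_mul; [apply cd_conj; exact (Hx1 j Hj x t) | apply cd_const].
  - cbv beta. rewrite omega_x_dform.
    unfold Q_new_dx, msub, mscal. rewrite comm_sigma3_entry by auto.
    unfold rank1_dx, msub, mscal, madd, rank1. cbv beta zeta. field. cx_side.
Qed.

Lemma darboux_lax_t : lax_t N lam Q1 Phi1new.
Proof.
  destruct HOm as [Hnorm [_ [_ HOt]]].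
  exists (fun x t => Q_new_dx N k lam1 (Qmat N k (q x t)) (Qmat N k (qx x t)) (Phi1 x t) (Om x t)).
  split; [exact Q_new_has_dx|].
  intros j Hj x t.
  change (cd (fun s => Phi1new x s j) t (mvmul N (Vt N lam (Q1 x t)
    (Q_new_dx N k lam1 (Qmat N k (q x t)) (Qmat N k (qx x t)) (Phi1 x t) (Om x t))) (Phi1new x t) j)).
  eapply cd_val.
  - apply (cd_Phi_new N k lam1 lam (fun s => Phi1 x s) (fun s => Phi x s) (fun s => Om x s)
      (mvmul N (Vt N lam1 (Qmat N k (q x t)) (Qmat N k (qx x t))) (Phi1 x t))
      (mvmul N (Vt N lam (Qmat N k (q x t)) (Qmat N k (qx x t))) (Phi x t))
      (omega_t N k lam1 lam1 (Qmat N k (q x t)) (Phi1 x t) (Phi1 x t)) t j Hj).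
    + intros i Hi. exact (Ht1 i Hi x t).
    + intros i Hi. exact (Ht i Hi x t).
    + exact (HOt x t).
    + apply Hnz.
    + exact Csub_lam_neq0.
  - unfold omega_t. rewrite omega_x_dform, mform_Lamd.
    apply darboux_t_identity; auto. exact Csub_lam_neq0.
Qed.

End Darboux.

Theorem mainTheorem2 (N k : nat) (q : R -> R -> vec) (lam1 lam : Cx)
  (Phi1 Phi : R -> R -> vec) (Om11 : R -> R -> Cx) :
  (1 <= N)%nat -> (k <= N)%nat ->
  (forall j, (j < N)%nat -> Csmooth (fun x t => q x t j)) ->
  is_solution N k q lam1 Phi1 ->
  is_solution N k q lam Phi ->
  lam <> Cconj lam1 ->
  (Im lam1 <> 0 ->
     forall x t, Om11 x t = Omega N k lam1 lam1 (Phi1 x t) (Phi1 x t)) ->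
  (Im lam1 = 0 ->
     (forall x t, dform N (Phi1 x t) (Lamd k) (Phi1 x t) = C0) /\
     (forall x t, Im (Om11 x t) = 0) /\
     smooth2 (fun x t => Re (Om11 x t)) /\
     Cpdx Om11 (fun x t => omega_x N k (Phi1 x t) (Phi1 x t)) /\
     Cpdt Om11 (fun x t => omega_t N k lam1 lam1 (Qmat N k (q x t)) (Phi1 x t) (Phi1 x t))) ->
  (forall x t, Om11 x t <> C0) ->
  let Q1 := fun x t => Q_new N k (Qmat N k (q x t)) (Om11 x t) (Phi1 x t) in
  let Phi1new := fun x t => Phi_new N k lam1 lam (Om11 x t) (Phi1 x t) (Phi x t) in
  (exists q1 : R -> R -> vec,
     forall x t i j, (i <= N)%nat -> (j <= N)%nat -> Q1 x t i j = Qmat N k (q1 x t) i j) /\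
  lax_x N lam Q1 Phi1new /\
  lax_t N lam Q1 Phi1new.
Proof.
  intros _ _ _ [_ [Hx1 Ht1]] [_ [Hx Ht]] Hmu Hcomplex Hreal Hnz Q1 Phi1new.
  (* Fix one derivative [Qmat qx] of [Q]; both t-equations hold with it. *)
  pose proof Ht1 as [Qx [HQx _]].
  set (qx := fun x t l => Qx x t (S l) 0%nat).
  pose proof (Qmat_dx N k q Qx HQx) as Hqx.
  pose proof (lax_t_with_of_lax_t N k lam1 q qx Phi1 Hqx Ht1) as Ht1'.
  pose proof (lax_t_with_of_lax_t N k lam q qx Phi Hqx Ht) as Ht'.
  assert (HOm : Omega_potential N k lam1 q Phi1 Om11).
  { destruct (Req_dec (Im lam1) 0) as [Him | Him].
    - destruct (Hreal Him) as [Hnull [HIm [_ [Hdx Hdt]]]].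
      exact (Omega_potential_real N k lam1 q Phi1 Om11 Him Hnull HIm Hdx Hdt).
    - exact (Omega_potential_complex N k lam1 q qx Phi1 Om11 Him Hx1 Ht1' (Hcomplex Him)). }
  split; [|split].
  - exact (darboux_potential_shape N k lam1 q Phi1 Om11 HOm Hnz).
  - exact (darboux_lax_x N k lam1 lam q Phi1 Phi Om11 Hx1 Hx HOm Hnz Hmu).
  - exact (darboux_lax_t N k lam1 lam q qx Phi1 Phi Om11 Hqx Hx1 Ht1' Ht' HOm Hnz Hmu).
Qed.
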